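(* Let $p$ be a prime with $p\equiv 1\pmod 3$ and let $a$ be a positive integer. Then $$\sum_{k=1}^{\frac{2}{3}(p^a-1)}\binom{2k}{k}\equiv 0\pmod{p^2}.$$
   Context: Note that $\frac23(p^a-1)$ is a positive integer since $p^a\equiv1\pmod 3$. *)

From mathcomp Require Import all_boot.

From mathcomp Require Import all_boot all_order all_algebra.
From mathcomp Require Import ring zify.
Set Implicit Arguments. Unset Strict Implicit. Unset Printing Implicit Defensive.
Import GRing.Theory.
Local Open Scope ring_scope.

(* Let n = p^a = 6h + 1 and Phi3 = X^2 + X + 1.  The Cauchy-Mirimanoff
   polynomial C = (X + 1)^n - X^n - 1 is divisible by Phi3 (as n = 1 mod 6)
   and vanishes mod p (Frobenius), so C = p Phi3 R with R in Z[X].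
   The sum of the C(2k, k), k <= 4h, is the X^(4h)-coefficient of
   ((X + 1)^(8h+2) - X^(4h+1)) / Phi3.  Writing (X + 1)^(8h+2) as
   (X + 1)^(2h+1) (C + 1 + X^n) shows that it equals 1 + p M, where
   M = [X^(4h)] R (X + 1)^(2h+1), because the rest of the quotient agrees
   with ((X + 1)^(2h+1) + X^(4h+2)) / Phi3 up to degree 4h.
   It remains to see that p divides M.  Put T = R (X + 1)^(2h), so that
   M = T_(4h) + T_(4h-1).  Since C (X + 1)^(2h) is palindromic, so is T,
   whence M = 2 T_(4h-1).  Since C and Phi3 are invariant under
   X |-> -(X + 1), so is R, which expands T_(4h-1) as a second sum over the
   coefficients of R; binomial congruences modulo the prime power n turn it
   into -M mod p.  Thus 3 T_(4h-1) = 0 mod p, and p <> 3. *)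

Local Notation Phi3 := ('X^2 + 'X + 1).

Lemma coef_Xadd1_exp (R : nzRingType) (m i : nat) :
  (('X + 1 : {poly R}) ^+ m)`_i = 'C(m, i)%:R.
Proof.
elim: m i => [|m IHm] [|i]; rewrite ?expr0 ?coef1 // exprSr mulrDr mulr1 coefD coefMX /=.
  by rewrite add0r IHm !bin0.
by rewrite !IHm binS natrD addrC.
Qed.

Lemma size_Xadd1_exp (R : nzRingType) m : size (('X + 1 : {poly R}) ^+ m) = m.+1.
Proof. by rewrite -[1]opprK -polyC1 -polyCN size_exp_XsubC. Qed.

Lemma signr_odd_double (R : nzRingType) (k : nat) : (-1 : R) ^+ (2 * k).+1 = -1.
Proof. by rewrite -signr_odd /= oddM. Qed.

Lemma coef_signM (R : nzRingType) (q : {poly R}) k i :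
  ((-1) ^+ k * q)`_i = (-1) ^+ k * q`_i.
Proof.
by rewrite -signr_odd -[in RHS]signr_odd; case: odd; rewrite ?mul1r ?mulN1r ?coefN.
Qed.

Section BinomialsModPrimePower.
Variables (p a : nat).
Hypothesis p_pr : prime p.
Local Notation n := (p ^ a)%N.

Let pexp_gt0 : (0 < n)%N.
Proof. by rewrite expn_gt0 prime_gt0. Qed.

Lemma bin_pexp_Fp m : (0 < m < n)%N -> 'C(n, m)%:R = 0 :> 'F_p.
Proof.
case/andP=> m_gt0 lt_mn.
have pchar_p : p \in [pchar {poly 'F_p}] by rewrite pchar_poly (pchar_Fp p_pr).
have pchar_n : [pchar {poly 'F_p}].-nat n.
  by rewrite (eq_pnat _ (pcharf_eq pchar_p)) pnatX pnat_id ?orbT.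
have := congr1 (fun q : {poly 'F_p} => q`_m) (exprDn_pchar 'X 1 pchar_n).
by rewrite /= coef_Xadd1_exp expr1n coefD coefXn coef1 ltn_eqF // gtn_eqF ?addr0.
Qed.

Lemma bin_pred_pexp_Fp m : (m < n)%N -> 'C(n.-1, m)%:R = (-1) ^+ m :> 'F_p.
Proof.
elim: m => [|m IHm] lt_mn; first by rewrite bin0.
have /eqP := bin_pexp_Fp (m := m.+1) lt_mn.
rewrite -{1}(prednK pexp_gt0) binS natrD IHm ?(ltnW lt_mn) // addr_eq0 => /eqP->.
by rewrite exprS mulN1r.
Qed.

Lemma bin_pred_pexpB_Fp i m : (i + m < n)%N ->
  'C(n.-1 - i, m)%:R = (-1) ^+ m * 'C(i + m, m)%:R :> 'F_p.
Proof.
elim: i m => [|i IHi] m.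
  by rewrite subn0 add0n binn mulr1 => /bin_pred_pexp_Fp.
elim: m => [|m IHm] lt_n; first by rewrite !bin0 expr0 mul1r.
have n_pred : (n.-1 - i = (n.-1 - i.+1).+1)%N.
  by move: lt_n; rewrite -(prednK pexp_gt0); lia.
have := IHi m.+1 ltac:(lia); rewrite n_pred binS natrD IHm; last by lia.
move/(canRL (addrK _)) ->.
rewrite !addSn !addnS [in RHS]binS natrD exprS; ring.
Qed.

Lemma bin_pexpD_Fp x y : (y < n)%N -> 'C(n + x, y)%:R = 'C(x, y)%:R :> 'F_p.
Proof.
move=> lt_yn; rewrite -binomial.Vandermonde natr_sum big_ord_recl bin0 mul1n subn0.
rewrite big1 ?addr0 // => j _.
by rewrite natrM bin_pexp_Fp ?mul0r //= (leq_ltn_trans _ lt_yn).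
Qed.

(* The left summand is [X^(4h)] X^j (X + 1)^(2h+1), the right one is
   [X^(4h-1)] (-(X + 1))^j (X + 1)^(2h). *)
Lemma bin_cancel_Fp h j : n = (6 * h).+1 -> (j < 6 * h - 1)%N ->
  (if (4 * h < j)%N then 0 else 'C((2 * h).+1, 4 * h - j)%:R) +
    (-1) ^+ j * 'C(j + 2 * h, (4 * h).-1)%:R = 0 :> 'F_p.
Proof.
move=> n_eq lt_j.
have [lt_4h_j|le_j_4h] := ltnP (4 * h) j.
  rewrite add0r -(subnKC (_ : n <= j + 2 * h)%N); last by rewrite n_eq; lia.
  by rewrite bin_pexpD_Fp ?bin_small ?mulr0 //; lia.
have [lt_j_2h|le_2h_j] := ltnP j (2 * h - 1).
  by rewrite !bin_small ?mulr0 ?addr0 //; lia.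
set m := (4 * h - j)%N.
have -> : (j + 2 * h = n.-1 - m)%N by rewrite n_eq /m; lia.
rewrite -[in 'C(n.-1 - m, _)]bin_sub; last by rewrite n_eq /m; lia.
have -> : (n.-1 - m - (4 * h).-1 = (2 * h).+1 - m)%N by rewrite n_eq /m; lia.
rewrite bin_pred_pexpB_Fp subnKC ?bin_sub; try by rewrite ?n_eq /m; lia.
rewrite mulrA -exprD (_ : (j + _)%N = (2 * (j - h)).+1); last by rewrite /m; lia.
by rewrite signr_odd_double mulN1r subrr.
Qed.

End BinomialsModPrimePower.

Lemma coef0_Phi3 (R : nzRingType) : (Phi3 : {poly R})`_0 = 1.
Proof. by rewrite !coefD coefXn coefX coef1 !add0r. Qed.

Lemma size_Phi3 (R : nzRingType) : size (Phi3 : {poly R}) = 3%N.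
Proof. by rewrite -addrA size_polyDl size_polyXn // -polyC1 size_XaddC. Qed.

Lemma coef_Phi3M (R : nzRingType) (q : {poly R}) i : (Phi3 * q)`_i =
  (if i is j.+2 then q`_j else 0) + (if i is j.+1 then q`_j else 0) + q`_i.
Proof.
by rewrite !mulrDl mul1r !coefD coefXnM coefXM; case: i => [|[|i]] //; rewrite subn2.
Qed.

Lemma coef_eq0_of_mul_Xn (R : nzRingType) (d q r : {poly R}) m i :
  d`_0 = 1 -> d * q = 'X^m * r -> (i < m)%N -> q`_i = 0.
Proof.
move=> d0 dq_eq; elim/ltn_ind: i => i IHi lt_im.
have := congr1 (fun s : {poly R} => s`_i) dq_eq.
rewrite /= coefXnM lt_im coefMr big_ord_recr /= subnn d0 mul1r big1 ?add0r // => j _.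
by rewrite IHi ?mulr0 //; have := ltn_ord j; lia.
Qed.

Section Palindromes.
Variable R : nzRingType.
Implicit Types q r : {poly R}.

Definition palindromic s q := forall i, (i <= s)%N -> q`_i = q`_(s - i).

Lemma palindromicB s q r :
  palindromic s q -> palindromic s r -> palindromic s (q - r).
Proof. by move=> pal_q pal_r i le_is; rewrite !coefB pal_q // pal_r. Qed.

Lemma palindromic_Xadd1_exp m : palindromic m (('X + 1 : {poly R}) ^+ m).
Proof. by move=> i le_im; rewrite !coef_Xadd1_exp bin_sub. Qed.

Lemma palindromicM_1addXn s k q : (size q <= s.+1)%N -> (s < k)%N ->
  palindromic s q -> palindromic (s + k) (q * (1 + 'X^k)).
Proof.
move=> /leq_sizeP q_eq0 lt_sk pal_q i le_i.
rewrite !mulrDr !mulr1 !coefD !coefMXn.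
have [le_is|lt_si] := leqP i s.
  have -> : (i < k)%N = true by lia.
  have -> : (s + k - i < k)%N = false by lia.
  rewrite (q_eq0 (s + k - i)%N) ?add0r ?addr0; last by lia.
  by rewrite pal_q //; congr q`_ _; lia.
have -> : (s + k - i < k)%N = true by lia.
rewrite (q_eq0 i) // add0r addr0.
have [lt_ik|le_ki] := ltnP i k; first by rewrite q_eq0 //; lia.
by rewrite pal_q; [congr q`_ _|]; lia.
Qed.

Lemma palindromic_Phi3M s q : (size q <= s.+1)%N ->
  palindromic s.+2 (Phi3 * q) -> palindromic s q.
Proof.
move=> /leq_sizeP q_eq0 pal_Pq; elim/ltn_ind=> i IHi le_is.
case: i IHi le_is => [|[|i]] IHi le_is.
- have := pal_Pq 0%N isT; rewrite subn0 !coef_Phi3M (q_eq0 s.+1) // (q_eq0 s.+2) //.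
  by rewrite !add0r !addr0 subn0.
- case: s le_is q_eq0 pal_Pq IHi => // s _ q_eq0 pal_Pq IHi.
  have := pal_Pq 1%N isT.
  rewrite subn1 !coef_Phi3M (q_eq0 s.+2) // (IHi 0%N) // subn0 subn1.
  by rewrite add0r addr0 [RHS]addrC => /addrI.
- have := pal_Pq i.+2 ltac:(lia).
  rewrite !coef_Phi3M (_ : s.+2 - i.+2 = (s - i.+2).+2)%N; last by lia.
  rewrite (IHi i) ?(IHi i.+1) //; try lia.
  rewrite (_ : s - i.+1 = (s - i.+2).+1)%N; last by lia.
  rewrite (_ : s - i = (s - i.+2).+2)%N; last by lia.
  by rewrite [in RHS]addrC [q`_(s - i.+2) + _]addrC addrA => /addrI.
Qed.

End Palindromes.

Section Phi3Identities.
Variable R : comNzRingType.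

Definition cauchy_mirimanoff n : {poly R} := ('X + 1) ^+ n - 'X ^+ n - 1.

Definition central_bin_poly m : {poly R} :=
  \sum_(i < m.+1) 'X ^+ (m - i) * ('X + 1) ^+ (2 * i).

Definition Xadd1_exp_quot k : {poly R} :=
  \sum_(i < k.+1) ('X + 1) ^+ (k - i) * (- 'X ^+ 2) ^+ i.

Lemma Phi3M_central_bin_poly m :
  Phi3 * central_bin_poly m = ('X + 1) ^+ (2 * m.+1) - 'X ^+ m.+1.
Proof.
rewrite exprM -opprB subrXX -mulNr opprB.
by congr (_ * _); [ring | apply: eq_bigr => i _; rewrite exprM].
Qed.

Lemma coef_central_bin_poly m :
  (central_bin_poly m)`_m = \sum_(i < m.+1) 'C(2 * i, i)%:R.
Proof.
rewrite coef_sum; apply: eq_bigr => -[i /= lt_im] _.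
by rewrite coefXnM ltnNge leq_subr coef_Xadd1_exp; congr 'C(_, _)%:R; lia.
Qed.

Lemma Phi3M_Xadd1_exp_quot k :
  Phi3 * Xadd1_exp_quot k = ('X + 1) ^+ k.+1 - (- 'X ^+ 2) ^+ k.+1.
Proof. by rewrite subrXX; congr (_ * _); ring. Qed.

Lemma coef_Xadd1_exp_quot k : (Xadd1_exp_quot k)`_(2 * k) = (-1) ^+ k.
Proof.
rewrite coef_sum big_ord_recr big1 => [|i _] /=.
  rewrite add0r subnn expr0 mul1r (exprNn 'X^2) coef_signM -exprM coefXn.
  by rewrite eqxx mulr1.
rewrite (exprNn 'X^2) mulrCA coef_signM -exprM coefMXn ltnNge leq_pmul2l //.
rewrite ltnW //= coef_Xadd1_exp bin_small ?mulr0 //.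
by have := ltn_ord i; lia.
Qed.

Lemma Phi3_dvd_X3exp_subr1 m : exists w, 'X ^+ (3 * m) - 1 = Phi3 * w :> {poly R}.
Proof.
exists (('X - 1) * \sum_(i < m) ('X ^+ 3 : {poly R}) ^+ (m.-1 - i) * 1 ^+ i).
by rewrite exprM -[X in _ - X](expr1n _ m) subrXX mulrA; congr (_ * _); ring.
Qed.

(* Modulo Phi3, X + 1 = - X^2 and X^3 = 1. *)
Lemma Phi3_dvd_cauchy_mirimanoff h :
  exists w, cauchy_mirimanoff (6 * h).+1 = Phi3 * w.
Proof.
have [u Xu] := Phi3_dvd_X3exp_subr1 (4 * h).
have [v Xv] := Phi3_dvd_X3exp_subr1 (2 * h).
exists (Xadd1_exp_quot (6 * h) - 'X ^+ 2 * u - 'X * v - 1).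
have X2n : (- 'X ^+ 2) ^+ (6 * h).+1 = - ('X ^+ 2 * 'X ^+ (3 * (4 * h))) :> {poly R}.
  rewrite -exprD exprNn (_ : 6 * h = 2 * (3 * h))%N ?signr_odd_double ?mulN1r; last by lia.
  by rewrite -exprM; congr (- 'X ^+ _); lia.
have Xn : 'X ^+ (6 * h).+1 = 'X * 'X ^+ (3 * (2 * h)) :> {poly R}.
  by rewrite -exprS; congr ('X ^+ _); lia.
rewrite /cauchy_mirimanoff -[('X + 1) ^+ _](subrK ((- 'X ^+ 2) ^+ (6 * h).+1)).
rewrite -Phi3M_Xadd1_exp_quot X2n Xn.
rewrite -[_ ^+ (3 * (4 * h))](subrK 1) -[_ ^+ (3 * (2 * h))](subrK 1) Xu Xv; ring.
Qed.

Lemma comp_Phi3_oppXadd1 : Phi3 \Po - ('X + 1) = Phi3 :> {poly R}.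
Proof. by rewrite !comp_polyD rmorphXn rmorph1 /= comp_polyX; ring. Qed.

Lemma comp_cauchy_mirimanoff_oppXadd1 n : odd n ->
  cauchy_mirimanoff n \Po - ('X + 1) = cauchy_mirimanoff n.
Proof.
move=> n_odd; rewrite !comp_polyB !rmorphXn rmorph1 /= comp_polyD comp_polyX rmorph1.
rewrite (_ : - ('X + 1) + 1 = - 'X); last by ring.
rewrite (exprNn 'X) (exprNn ('X + 1)) -signr_odd n_odd expr1.
by rewrite !mulN1r opprK (addrC (- _)).
Qed.

Lemma cauchy_mirimanoff_pchar p a :
  p \in [pchar R] -> cauchy_mirimanoff (p ^ a)%N = 0.
Proof.
move=> pchar_p; have pchar_pX : p \in [pchar {poly R}] by rewrite pchar_poly.
have pchar_pa : [pchar {poly R}].-nat (p ^ a)%N.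
  by rewrite (eq_pnat _ (pcharf_eq pchar_pX)) pnatX pnat_id ?(pcharf_prime pchar_p) ?orbT.
by rewrite /cauchy_mirimanoff exprDn_pchar // expr1n addrAC addrK subrr.
Qed.

End Phi3Identities.

Lemma map_cauchy_mirimanoff (R S : comNzRingType) (f : {rmorphism R -> S}) n :
  map_poly f (cauchy_mirimanoff R n) = cauchy_mirimanoff S n.
Proof. by rewrite !rmorphB !rmorphXn rmorphD /= map_polyX rmorph1. Qed.

Lemma Phi3_prime_dvd_cauchy_mirimanoff p a h : prime p -> (p ^ a)%N = (6 * h).+1 ->
  exists R : {poly int}, cauchy_mirimanoff int (6 * h).+1 = Phi3 * ((p : int)%:P * R).
Proof.
move=> p_pr pexp_eq; have pchar_p := pchar_Fp p_pr.
have [w cm_w] := Phi3_dvd_cauchy_mirimanoff int h.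
suff p_dvd_w i : ((p : int) %| w`_i)%Z.
  exists (\poly_(i < size w) (w`_i %/ p)%Z); rewrite cm_w; congr (_ * _); apply/polyP => i.
  rewrite coefCM coef_poly; case: ltnP => [_|le_wi]; first by rewrite mulrC divzK.
  by rewrite mulr0 nth_default.
have := congr1 (map_poly (intmul (1 : 'F_p))) cm_w.
rewrite map_cauchy_mirimanoff -pexp_eq cauchy_mirimanoff_pchar // rmorphM /=.
move/esym/eqP; rewrite mulf_eq0 => /orP[|/eqP/polyP/(_ i)].
  by rewrite !rmorphD rmorphXn /= map_polyX rmorph1 -size_poly_eq0 size_Phi3.
by rewrite coef_map coef0 (dvdz_pcharf pchar_p) => ->.
Qed.

Section CauchyMirimanoffQuotient.
Variables (h : nat) (c : int) (R : {poly int}).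
Hypothesis cm_eq : cauchy_mirimanoff int (6 * h).+1 = Phi3 * (c%:P * R).

Lemma sum_central_bin_quot : \sum_(i < (4 * h).+1) 'C(2 * i, i)%:R =
  1 + c * (R * ('X + 1) ^+ (2 * h).+1)`_(4 * h).
Proof.
set S := R * _.
have Phi3M_eq : Phi3 * (central_bin_poly int (4 * h) - Xadd1_exp_quot int (2 * h) - c%:P * S)
    = 'X ^+ (4 * h).+1 * ('X ^+ (2 * h) * ('X + 1) ^+ (2 * h).+1 - 'X - 1).
  rewrite !mulrBr Phi3M_central_bin_poly Phi3M_Xadd1_exp_quot /S.
  rewrite [c%:P * _]mulrA (mulrA Phi3) -cm_eq /cauchy_mirimanoff.
  rewrite exprNn -exprM signr_odd_double.
  rewrite (_ : 2 * (4 * h).+1 = (6 * h).+1 + (2 * h).+1)%N; last by lia.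
  rewrite (_ : 2 * (2 * h).+1 = (4 * h).+1 + 1)%N; last by lia.
  rewrite (_ : (6 * h).+1 = (4 * h).+1 + 2 * h)%N; last by lia.
  rewrite !exprD; ring.
have quot_coef : (Xadd1_exp_quot int (2 * h))`_(4 * h) = 1.
  rewrite (_ : 4 * h = 2 * (2 * h))%N; last by lia.
  by rewrite coef_Xadd1_exp_quot -signr_odd oddM.
have := coef_eq0_of_mul_Xn (coef0_Phi3 _) Phi3M_eq (ltnSn (4 * h)).
rewrite !coefB coef_central_bin_poly quot_coef coefCM => /eqP.
by rewrite subr_eq0 subr_eq addrC => /eqP.
Qed.

Hypothesis c_neq0 : c != 0.

Let Phi3_neq0 : Phi3 != 0 :> {poly int}.
Proof. by rewrite -size_poly_eq0 size_Phi3. Qed.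

Lemma size_cauchy_mirimanoff_quot : (size R <= 6 * h - 1)%N.
Proof.
have size_cm : (size (cauchy_mirimanoff int (6 * h).+1) <= (6 * h).+1)%N.
  apply/leq_sizeP => j le_nj; rewrite !coefB coef_Xadd1_exp coefXn coef1.
  have [-> | lt_nj] := eqVneq j (6 * h).+1; first by rewrite binn subrr.
  by rewrite bin_small ?subrr //=; lia.
have [->|R_neq0] := eqVneq R 0; first by rewrite size_poly0.
move: size_cm; rewrite cm_eq size_mul ?mulf_neq0 ?polyC_eq0 // size_Phi3 size_Cmul //.
by move=> size_le; have : (2 + size R <= (6 * h).+1)%N := size_le; lia.
Qed.

Lemma comp_cauchy_mirimanoff_quot_oppXadd1 : R \Po - ('X + 1) = R.
Proof.
have cC_neq0 : c%:P != 0 by rewrite polyC_eq0.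
have := congr1 (comp_poly (- ('X + 1))) cm_eq.
rewrite /= comp_cauchy_mirimanoff_oppXadd1 /= ?oddM // cm_eq !comp_polyM.
by rewrite comp_Phi3_oppXadd1 comp_polyC => /(mulfI Phi3_neq0)/(mulfI cC_neq0)/esym.
Qed.

Hypothesis h_gt0 : (0 < h)%N.

Lemma coef_center_cauchy_mirimanoff_quot :
  (R * ('X + 1) ^+ (2 * h))`_(4 * h) = (R * ('X + 1) ^+ (2 * h))`_(4 * h).-1.
Proof.
set T := R * _.
have pal_cmX :
    palindromic (8 * h).+1 (cauchy_mirimanoff int (6 * h).+1 * ('X + 1) ^+ (2 * h)).
  have -> : cauchy_mirimanoff int (6 * h).+1 * ('X + 1) ^+ (2 * h) =
      ('X + 1) ^+ (8 * h).+1 - ('X + 1) ^+ (2 * h) * (1 + 'X ^+ (6 * h).+1).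
    by rewrite /cauchy_mirimanoff (_ : (8 * h).+1 = (6 * h).+1 + 2 * h)%N ?exprD; [ring | lia].
  apply: palindromicB; first exact: palindromic_Xadd1_exp.
  rewrite (_ : (8 * h).+1 = 2 * h + (6 * h).+1)%N; last by lia.
  by apply: palindromicM_1addXn; rewrite ?size_Xadd1_exp; try exact: palindromic_Xadd1_exp; lia.
rewrite cm_eq -!mulrA -/T (_ : (8 * h).+1 = (8 * h).-1.+2)%N in pal_cmX; last by lia.
have size_cT : (size (c%:P * T)%R <= (8 * h).-1.+1)%N.
  rewrite size_Cmul // (leq_trans (size_polyMleq _ _)) // size_Xadd1_exp.
  by have := size_cauchy_mirimanoff_quot; rewrite -!subn1; set s := size R; lia.
have le_4h : (4 * h <= (8 * h).-1)%N by rewrite -subn1; lia.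
have := palindromic_Phi3M size_cT pal_cmX le_4h.
rewrite !coefCM (_ : (8 * h).-1 - 4 * h = (4 * h).-1)%N; last by rewrite -!subn1; lia.
exact: mulfI.
Qed.

End CauchyMirimanoffQuotient.

Lemma coef_Xadd1_expM_comp_Fp p a h (r : {poly int}) :
  prime p -> (p ^ a)%N = (6 * h).+1 -> (size r <= 6 * h - 1)%N ->
  ((r * ('X + 1) ^+ (2 * h).+1)`_(4 * h) +
     ((r \Po - ('X + 1)) * ('X + 1) ^+ (2 * h))`_(4 * h).-1)%:~R = 0 :> 'F_p.
Proof.
move=> p_pr pexp_eq size_r.
rewrite -[r in r * _]coefK poly_def comp_polyE !mulr_suml !coef_sum -big_split.
rewrite rmorph_sum big1 // => j _ /=.
rewrite -!scalerAl !coefZ (exprNn ('X + 1)) -mulrA -exprD coef_signM coefXnM.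
rewrite !coef_Xadd1_exp -mulrDr rmorphM rmorphD /= (fun_if (fun x : int => x%:~R)).
rewrite rmorph0 rmorphM rmorphXn rmorphN1 !rmorph_nat (bin_cancel_Fp p_pr pexp_eq) ?mulr0 //.
by have := ltn_ord j; set s := size r; lia.
Qed.

Lemma prime_dvd_coef_cauchy_mirimanoff_quot p a h (R : {poly int}) :
  prime p -> p != 3%N -> (0 < h)%N -> (p ^ a)%N = (6 * h).+1 ->
  cauchy_mirimanoff int (6 * h).+1 = Phi3 * ((p : int)%:P * R) ->
  ((p : int) %| (R * ('X + 1) ^+ (2 * h).+1)`_(4 * h))%Z.
Proof.
move=> p_pr p_neq3 h_gt0 pexp_eq cm_eq.
have p_neq0 : (p : int) != 0 by rewrite eqz_nat -lt0n prime_gt0.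
have pchar_p := pchar_Fp p_pr.
have center := coef_center_cauchy_mirimanoff_quot cm_eq p_neq0 h_gt0.
set T := R * ('X + 1) ^+ (2 * h) in center.
have M_eq : (R * ('X + 1) ^+ (2 * h).+1)`_(4 * h) = T`_(4 * h).-1 *+ 2.
  rewrite exprSr mulrA mulrDr mulr1 coefD coefMX -/T center mulr2n addrC.
  by rewrite (_ : (4 * h == 0)%N = false) //; lia.
have := coef_Xadd1_expM_comp_Fp p_pr pexp_eq (size_cauchy_mirimanoff_quot cm_eq p_neq0).
rewrite (comp_cauchy_mirimanoff_quot_oppXadd1 cm_eq p_neq0) -/T M_eq -mulrSr rmorphMn /= => /eqP.
rewrite -mulr_natr mulf_eq0 -(dvdn_pcharf pchar_p) dvdn_prime2 // (negbTE p_neq3) orbF.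
by rewrite (dvdz_pcharf pchar_p) rmorphMn /= => /eqP->; rewrite mul0rn.
Qed.

Lemma pexp_mod6 p a : prime p -> (p %% 3 = 1)%N -> (0 < a)%N ->
  exists2 h, (p ^ a = (6 * h).+1)%N & (0 < h)%N.
Proof.
move=> p_pr p_mod3 a_gt0.
have p_odd : odd p by case: (even_prime p_pr) p_mod3 => [->|].
have pexp_gt1 : (1 < p ^ a)%N by rewrite -{1}(expn0 p) ltn_exp2l // prime_gt1.
have pexp_mod3 : (p ^ a %% 3 = 1)%N by rewrite -modnXm p_mod3 exp1n.
have pexp_mod2 : (p ^ a %% 2 = 1)%N by rewrite modn2 oddX p_odd orbT.
by exists (p ^ a %/ 6)%N; move: pexp_gt1 pexp_mod3 pexp_mod2; set N := (p ^ a)%N; lia.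
Qed.

Unset Implicit Arguments.
Local Close Scope ring_scope.

(* The upper limit (2/3)(p^a - 1) is written (2 * (p^a - 1)) %/ 3, which is
   exact since p^a = 1 (mod 3). *)
Theorem theorem1p2 (p a : nat) (hp : prime p) (hp3 : p %% 3 = 1) (ha : 0 < a) :
  p ^ 2 %| \sum_(1 <= k < ((2 * (p ^ a - 1)) %/ 3).+1) 'C(2 * k, k).
Proof.
have [h pexp_eq h_gt0] := pexp_mod6 hp hp3 ha.
have p_neq3 : p != 3 by apply/eqP => p_eq3; rewrite p_eq3 in hp3.
have -> : (2 * (p ^ a - 1)) %/ 3 = 4 * h by rewrite pexp_eq; lia.
have [R cm_eq] := Phi3_prime_dvd_cauchy_mirimanoff hp pexp_eq.
have := sum_central_bin_quot cm_eq.
have /dvdzP[k ->] := prime_dvd_coef_cauchy_mirimanoff_quot hp p_neq3 h_gt0 pexp_eq cm_eq.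
rewrite big_ord_recl muln0 bin0 -natr_sum => /addrI sum_eq.
rewrite big_add1 big_mkord.
change (((p ^ 2)%N : int) %| ((\sum_(i < 4 * h) 'C(2 * lift ord0 i, lift ord0 i))%N : int))%Z.
apply/dvdzP; exists k.
by rewrite -natz sum_eq -[((p ^ 2)%N : int)]natz natrX natz; ring.
Qed.
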